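(* For every $k\ge 1$, the commutator subgroup of $G_k$ consists exactly of commutators: $$G_k'=\{[f_1,f_2]: f_1,f_2\in G_k\}.$$
   Context: $G_k$ is the subgroup of the automorphism group $B_k\cong\wr_{i=1}^kC_2$ of the binary rooted tree of depth $k$ consisting of automorphisms acting by even permutations on the $2^k$ leaves; $G_k\cong\mathrm{Syl}_2(A_{2^k})$. $[a,b]=aba^{-1}b^{-1}$. *)

From mathcomp Require Import all_boot fingroup perm.
Set Implicit Arguments. Unset Strict Implicit. Unset Printing Implicit Defensive.

(* Leaves of the binary rooted tree of depth k: binary words of length k.
   A vertex at level j is a word of length j; the ancestor of leaf x at
   level j is its prefix [take j x]. *)
Definition leaf (k : nat) := (k.-tuple bool)%type.

(* A permutation of the leaves is (the leaf action of) a tree automorphism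
   iff it preserves the ancestor structure: leaves with the same level-j
   ancestor are sent to leaves with the same level-j ancestor, for all j.
   Tree automorphisms act faithfully on the leaves, so B_k is identified
   with this subgroup of Sym(leaves). *)
Definition tree_aut (k : nat) (s : {perm leaf k}) : bool :=
  [forall x : leaf k, forall y : leaf k, forall j : 'I_k.+1,
     (take j x == take j y) ==> (take j (s x) == take j (s y))].

Definition B (k : nat) : {set {perm leaf k}} := [set s | tree_aut s].

Definition G (k : nat) : {set {perm leaf k}} := [set s in B k | ~~ odd_perm s].

(* Paper's commutator convention [a,b] = a b a^-1 b^-1. *)
Definition pcomm (gT : finGroupType) (a b : gT) : gT := (a * b * a^-1 * b^-1)%g.

(* Write an automorphism of the tree of depth n+1 as (a, b) σ^s with a, b in B_n acting
   on the two subtrees and σ the swap of the subtrees.  The maps (a, b) σ^s ↦ s and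
   (a, b) σ^s ↦ ab B_n' are homomorphisms into abelian groups, and so is
   (a, b) σ^s ↦ sgn a on G_(n+1) for n ≥ 1, where sgn((a, b) σ^s) = sgn a sgn b.  Hence
   every element of G_(n+1)' is (x, y) with x, y even and xy in B_n'.  Conversely, with
   [u, v] = u^-1 v^-1 u v, if xy = [b, d] then (x, y) = [(1, b) σ, (d y^-1, d)]; by
   induction every element of B_n' is such a [b, d] with b in G_n, and the parities of
   x, y put both factors of the commutator in G_(n+1). *)

From mathcomp Require Import all_boot fingroup perm.
From mathcomp Require Import morphism quotient commutator.
Set Implicit Arguments. Unset Strict Implicit. Unset Printing Implicit Defensive.
Local Open Scope group_scope.

Section CommutatorKernel.
Variables (gT : finGroupType) (H : {group gT}).

Lemma der1_kerb (f : gT -> bool) :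
  {in H &, {morph f : x y / x * y >-> x (+) y}} -> {in [~: H, H], forall w, f w = false}.
Proof.
move=> fM.
have f1 : f 1 = false by have := fM 1 1 (group1 H) (group1 H); rewrite mulg1 => /esym; case: (f 1).
have fV x : x \in H -> f x^-1 = f x.
  by move=> Hx; have := fM x x^-1 Hx (groupVr Hx); rewrite mulgV f1; case: (f x); case: (f x^-1).
have Kgrp : group_set [set x in H | ~~ f x].
  apply/group_setP; split=> [|x y]; first by rewrite inE group1 f1.
  by rewrite !inE => /andP [Hx fx] /andP [Hy fy]; rewrite groupM // fM // (negbTE fx) (negbTE fy).
suff sHK : [~: H, H] \subset Group Kgrp.
  by move=> w /(subsetP sHK); rewrite inE => /andP [_ /negbTE].
rewrite gen_subG; apply/subsetP => _ /imset2P [x y Hx Hy ->].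
rewrite inE groupR //= /commg /conjg !fM ?groupM ?groupV // !fV //.
by case: (f x); case: (f y).
Qed.

Lemma der1_ker (rT : finGroupType) (f : gT -> rT) :
  {in H &, {morph f : x y / x * y}} -> {in H &, forall x y, commute (f x) (f y)} ->
  {in [~: H, H], forall w, f w = 1}.
Proof.
move=> fM fC w Rw; pose phi := Morphism fM.
have abH : abelian (phi @* H).
  by apply/centsP => _ /morphimP [x _ Hx ->] _ /morphimP [y _ Hy ->]; apply: fC.
have : phi w \in phi @* [~: H, H] by rewrite mem_morphim // (subsetP (der1_subG H)).
by rewrite morphimR // (commG1P abH) => /set1gP.
Qed.

End CommutatorKernel.

Section Wreath.
Variable n : nat.
Implicit Types (c s t : bool) (a b : {perm leaf n}) (x : leaf n).

Lemma leaf_eta (u : leaf n.+1) : u = cons_tuple (thead u) (behead_tuple u).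
Proof. by apply: val_inj; case: u => [[|c s]]. Qed.

Lemma thead_cons c x : thead (cons_tuple c x) = c. Proof. by []. Qed.

Lemma behead_cons c x : behead_tuple (cons_tuple c x) = x. Proof. exact: val_inj. Qed.

Lemma leafS_ind (P : leaf n.+1 -> Prop) : (forall c x, P (cons_tuple c x)) -> forall u, P u.
Proof. by move=> Pcons u; rewrite [u]leaf_eta. Qed.

Lemma cons_leaf_inj c c' x x' : cons_tuple c x = cons_tuple c' x' -> c = c' /\ x = x'.
Proof. by move=> /(congr1 val) [-> /val_inj ->]. Qed.

Lemma perm_leafS_eq (p q : {perm leaf n.+1}) :
  (forall c x, p (cons_tuple c x) = q (cons_tuple c x)) -> p = q.
Proof. by move=> pq; apply/permP => u; rewrite [u]leaf_eta pq. Qed.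

Definition wreath_fun s a b (u : leaf n.+1) : leaf n.+1 :=
  cons_tuple (thead u (+) s) ((if thead u then b else a) (behead_tuple u)).

Lemma wreath_fun_inj s a b : injective (wreath_fun s a b).
Proof.
move=> u v; rewrite [u]leaf_eta [v]leaf_eta /wreath_fun !thead_cons !behead_cons.
move=> /cons_leaf_inj [/addIb eq_hd]; rewrite eq_hd; case: (thead v) => /perm_inj -> //.
Qed.

(* The element (a, b) σ^s of B_(n+1) = (B_n × B_n) ⋊ <σ>, σ the swap of the two subtrees. *)
Definition wreath s a b : {perm leaf n.+1} := perm (@wreath_fun_inj s a b).

Lemma wreathE s a b c x :
  wreath s a b (cons_tuple c x) = cons_tuple (c (+) s) ((if c then b else a) x).
Proof. by rewrite permE /wreath_fun thead_cons behead_cons. Qed.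

Lemma wreathM s a b t a' b' :
  wreath s a b * wreath t a' b' =
  wreath (s (+) t) (a * (if s then b' else a')) (b * (if s then a' else b')).
Proof.
apply: perm_leafS_eq => c x; rewrite permM !wreathE addbA; congr cons_tuple.
by case: c; case: s; rewrite /= permM.
Qed.

Lemma wreath1 : wreath false 1 1 = 1.
Proof. by apply: perm_leafS_eq => c x; rewrite wreathE perm1 addbF if_same perm1. Qed.

Lemma wreathV s a b :
  (wreath s a b)^-1 = wreath s (if s then b^-1 else a^-1) (if s then a^-1 else b^-1).
Proof.
by apply/eqP; rewrite eq_invg_mul wreathM addbb; case: s; rewrite /= !mulgV wreath1.
Qed.

Lemma wreath_inj s a b t a' b' : wreath s a b = wreath t a' b' -> [/\ s = t, a = a' & b = b'].
Proof.
move=> eqW.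
have eqWE c x : cons_tuple (c (+) s) ((if c then b else a) x) =
                cons_tuple (c (+) t) ((if c then b' else a') x) by rewrite -!wreathE eqW.
have [st _] := cons_leaf_inj (eqWE false (nseq_tuple n false)).
split=> //; apply/permP => x.
  by have [_] := cons_leaf_inj (eqWE false x).
by have [_] := cons_leaf_inj (eqWE true x).
Qed.

End Wreath.

Lemma tree_autP n (p : {perm leaf n}) :
  reflect (forall (x y : leaf n) j, take j x = take j y -> take j (p x) = take j (p y))
          (tree_aut p).
Proof.
apply: (iffP forallP) => [autp x y j | autp x].
  have [le_jn | lt_nj] := leqP j n.
    move/eqP => eq_xy; apply/eqP.
    by have /implyP := forallP (forallP (autp x) y) (Ordinal (le_jn : j < n.+1)); apply.
  by rewrite !take_oversize ?size_tuple ?(ltnW lt_nj) // => /val_inj ->.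
by apply/forallP => y; apply/forallP => j; apply/implyP => /eqP /autp /eqP.
Qed.

Lemma B_group n : group_set (B n).
Proof.
apply/group_setP; split=> [|p q]; first by rewrite inE; apply/tree_autP => x y j; rewrite !perm1.
rewrite !inE => /tree_autP autp /tree_autP autq; apply/tree_autP => x y j eq_xy.
by rewrite !permM; apply/autq/autp.
Qed.
Canonical B_groupType n := Group (B_group n).

Lemma tree_aut_take n (p : {perm leaf n}) x y j : p \in B n ->
  (take j (p x) == take j (p y)) = (take j x == take j y).
Proof.
move=> Bp; have BpV : p^-1 \in B n by rewrite groupV.
rewrite !inE in Bp BpV; move/tree_autP: Bp => autp; move/tree_autP: BpV => autpV.
apply/eqP/eqP => [|/autp //]; by move/autpV; rewrite !permK.
Qed.

Lemma take_cons n j c (x : leaf n) : take j.+1 (cons_tuple c x) = c :: take j x.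
Proof. by []. Qed.

Lemma wreath_B n s (a b : {perm leaf n}) : a \in B n -> b \in B n -> wreath s a b \in B n.+1.
Proof.
rewrite !inE => /tree_autP auta /tree_autP autb.
apply/tree_autP => u v [|j]; first by rewrite !take0.
rewrite [u]leaf_eta [v]leaf_eta !wreathE !take_cons => -[-> eq_uv]; congr cons.
by case: (thead v); [apply: autb | apply: auta].
Qed.

Lemma B_wreath n (p : {perm leaf n.+1}) : p \in B n.+1 ->
  exists s a b, [/\ a \in B n, b \in B n & p = wreath s a b].
Proof.
move=> Bp.
have eq_hd c c' x y : (thead (p (cons_tuple c x)) == thead (p (cons_tuple c' y))) = (c == c').
  have := tree_aut_take (cons_tuple c x) (cons_tuple c' y) 1 Bp.
  rewrite [p (cons_tuple c x)]leaf_eta [p (cons_tuple c' y)]leaf_eta.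
  by rewrite !take_cons !take0 !eqseq_cons !andbT.
pose s := thead (p (cons_tuple false (nseq_tuple n false))).
have hdE c x : thead (p (cons_tuple c x)) = c (+) s.
  apply/eqP; case: c; last by rewrite eq_hd.
  by move: (eq_hd true false x (nseq_tuple n false)); rewrite /s; case: (thead _); case: (thead _).
pose sec c x := behead_tuple (p (cons_tuple c x)).
have secE c x : p (cons_tuple c x) = cons_tuple (c (+) s) (sec c x) by rewrite [LHS]leaf_eta hdE.
have sec_inj c : injective (sec c).
  move=> x y eq_xy; suff /perm_inj/cons_leaf_inj[] : p (cons_tuple c x) = p (cons_tuple c y) by [].
  by rewrite !secE eq_xy.
have secB c : perm (sec_inj c) \in B n.
  rewrite inE; apply/tree_autP => x y j eq_xy; rewrite !permE.
  have := tree_aut_take (cons_tuple c x) (cons_tuple c y) j.+1 Bp.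
  by rewrite !secE !take_cons !eqseq_cons !eqxx eq_xy eqxx => /eqP.
exists s, (perm (sec_inj false)), (perm (sec_inj true)); split=> //.
by apply: perm_leafS_eq => c x; rewrite wreathE secE; case: c; rewrite permE.
Qed.

Lemma wreath_tperm n (x y : leaf n) :
  wreath false (tperm x y) 1 = tperm (cons_tuple false x) (cons_tuple false y).
Proof.
apply: perm_leafS_eq => c z; rewrite wreathE addbF; case: c.
  by rewrite perm1 tpermD // eq_sym; apply/eqP => /cons_leaf_inj [].
case: (tpermP x y z) => [->|->|zx zy]; rewrite ?tpermL ?tpermR //.
by rewrite tpermD //; apply/eqP => /cons_leaf_inj [_ eq_z]; [apply: zx | apply: zy].
Qed.

Lemma odd_wreath_l n (a : {perm leaf n}) : odd_perm (wreath false a 1) = odd_perm a.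
Proof.
have [ts -> dts] := prod_tpermP a; rewrite odd_perm_prod //.
pose lift (t : leaf n * leaf n) := (cons_tuple false t.1, cons_tuple false t.2).
have -> : wreath false (\prod_(t <- ts) tperm t.1 t.2) 1 = \prod_(t <- map lift ts) tperm t.1 t.2.
  elim: ts {dts} => [|t ts IHts]; first by rewrite !big_nil wreath1.
  by rewrite map_cons !big_cons -IHts -wreath_tperm wreathM /= mulg1.
rewrite odd_perm_prod ?size_map // all_map.
by apply: sub_all dts => t /=; apply: contra => /eqP /cons_leaf_inj [_ ->].
Qed.

Definition root_swap n := wreath true (1 : {perm leaf n}) 1.

Lemma odd_wreath_false n (a b : {perm leaf n}) :
  odd_perm (wreath false a b) = odd_perm a (+) odd_perm b.
Proof.
have -> : wreath false a b = wreath false a 1 * (root_swap n * wreath false b 1 * root_swap n).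
  by rewrite !wreathM /= !mul1g !mulg1.
by rewrite !odd_permM !odd_wreath_l; case: (odd_perm a); case: (odd_perm b); case: (odd_perm _).
Qed.

Definition swap12_fun m (u : leaf m.+2) : leaf m.+2 :=
  cons_tuple (thead (behead_tuple u)) (cons_tuple (thead u) (behead_tuple (behead_tuple u))).

Lemma swap12_funE m c1 c2 (x : leaf m) :
  swap12_fun (cons_tuple c1 (cons_tuple c2 x)) = cons_tuple c2 (cons_tuple c1 x).
Proof. by rewrite /swap12_fun !behead_cons !thead_cons. Qed.

Lemma swap12_fun_inv m : involutive (@swap12_fun m).
Proof.
by elim/leafS_ind => c1; elim/leafS_ind => c2 x; rewrite !swap12_funE.
Qed.

Lemma odd_root_swap m : odd_perm (root_swap m.+1) = false.
Proof.
pose r := perm (can_inj (@swap12_fun_inv m)).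
have rE u : r u = swap12_fun u by rewrite permE.
(* Exchanging the two top levels conjugates the root swap into one root swap in each subtree. *)
have -> : root_swap m.+1 = r * wreath false (root_swap m) (root_swap m) * r.
  apply: perm_leafS_eq => c1; elim/leafS_ind => c2 x.
  rewrite /root_swap !permM !rE swap12_funE !wreathE !if_same wreathE if_same !perm1.
  by rewrite addbF swap12_funE.
by rewrite !odd_permM odd_wreath_false addbb addbF addbb.
Qed.

Lemma odd_wreath m s (a b : {perm leaf m.+1}) :
  odd_perm (wreath s a b) = odd_perm a (+) odd_perm b.
Proof.
have -> : wreath s a b = wreath false a b * wreath s 1 1 by rewrite wreathM /= !mulg1.
by rewrite odd_permM odd_wreath_false; case: s; rewrite ?odd_root_swap ?wreath1 ?odd_perm1 addbF.
Qed.

Lemma G_group n : group_set (G n).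
Proof.
apply/group_setP; split=> [|p q]; first by apply/setIdP; rewrite group1 odd_perm1.
move=> /setIdP [Bp ep] /setIdP [Bq eq]; apply/setIdP.
by rewrite groupM // odd_permM (negbTE ep) (negbTE eq).
Qed.
Canonical G_groupType n := Group (G_group n).

Lemma G_sub_B n : G n \subset B n.
Proof. by apply/subsetP => p /setIdP []. Qed.

Lemma wreath_G m s (a b : {perm leaf m.+1}) : a \in B m.+1 -> b \in B m.+1 ->
  (wreath s a b \in G m.+2) = (odd_perm a == odd_perm b).
Proof.
move=> Ba Bb; rewrite [_ \in G _]inE wreath_B // odd_wreath.
by case: (odd_perm a); case: (odd_perm b).
Qed.

Lemma wreath_swap_G m (b : {perm leaf m.+1}) : b \in G m.+1 -> wreath true 1 b \in G m.+2.
Proof.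
by case/setIdP => Bb ob; rewrite wreath_G ?group1 // odd_perm1 (negbTE ob).
Qed.

(* Inverse of [wreath] on [B n.+1] (see [B_wreath]); the default value is junk. *)
Definition wsplit n (p : {perm leaf n.+1}) : bool * {perm leaf n} * {perm leaf n} :=
  odflt (false, 1, 1) [pick t | p == wreath t.1.1 t.1.2 t.2].

Lemma wsplitE n s (a b : {perm leaf n}) : wsplit (wreath s a b) = (s, a, b).
Proof.
rewrite /wsplit; case: pickP => [[[t a'] b'] /eqP /= /wreath_inj [-> -> ->] // | /(_ (s, a, b))].
by rewrite eqxx.
Qed.

Section DerivedSubgroupOfB.
Variable n : nat.
Let N := [~: B n, B n].

Lemma B_der1_root : {in [~: B n.+1, B n.+1], forall w, (wsplit w).1.1 = false}.
Proof.
apply: der1_kerb => _ _ /B_wreath [s [a [b [_ _ ->]]]] /B_wreath [t [c [d [_ _ ->]]]].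
by rewrite wreathM !wsplitE.
Qed.

Lemma B_der1_coset :
  {in [~: B n.+1, B n.+1], forall w, coset N ((wsplit w).1.2 * (wsplit w).2) = 1}.
Proof.
have nNB : B n \subset 'N(N) by exact: (der_norm 1 (B_groupType n)).
have cM : {in B n &, {morph coset N : a b / a * b}}.
  by move=> a b Ba Bb; rewrite morphM ?(subsetP nNB).
have cC : {in B n &, forall a b, commute (coset N a) (coset N b)}.
  move=> a b Ba Bb; apply: (centsP (sub_der1_abelian (subxx N))); exact: mem_quotient.
apply: der1_ker => [_ _ /B_wreath [s [a [b [Ba Bb ->]]]] /B_wreath [t [c [d [Bc Bd ->]]]] | ].
  rewrite wreathM !wsplitE /=; case: s; rewrite !cM ?groupM // -!mulgA; congr (_ * _).
    by rewrite mulgA (cC _ _ Bd Bb) -mulgA (cC _ _ Bd Bc).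
  by rewrite mulgA (cC _ _ Bc Bb) -mulgA.
move=> _ _ /B_wreath [s [a [b [Ba Bb ->]]]] /B_wreath [t [c [d [Bc Bd ->]]]].
by rewrite !wsplitE; apply: cC; rewrite groupM.
Qed.

Lemma B_der1_wreath w : w \in [~: B n.+1, B n.+1] ->
  exists x y, [/\ x \in B n, y \in B n, x * y \in N & w = wreath false x y].
Proof.
move=> Rw; have [s [x [y [Bx By def_w]]]] := B_wreath (subsetP (der1_subG _) w Rw).
have := B_der1_root Rw; have := B_der1_coset Rw; rewrite def_w wsplitE /= => /coset_idr xyN s0.
exists x, y; split; rewrite -?s0 //; apply: xyN.
by rewrite (subsetP (der_norm 1 (B_groupType n))) ?groupM.
Qed.

End DerivedSubgroupOfB.

Lemma G_wreath m p : p \in G m.+2 ->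
  exists s a b, [/\ a \in B m.+1, b \in B m.+1, odd_perm a = odd_perm b & p = wreath s a b].
Proof.
move=> Gp; have [s [a [b [Ba Bb def_p]]]] := B_wreath (subsetP (G_sub_B _) p Gp).
by exists s, a, b; split=> //; apply/eqP; rewrite -(wreath_G s) // -def_p.
Qed.

Lemma G_der1_parity m : {in [~: G m.+2, G m.+2], forall w, odd_perm (wsplit w).1.2 = false}.
Proof.
apply: der1_kerb => _ _ /G_wreath [s [a [b [_ _ _ ->]]]] /G_wreath [t [c [d [_ _ ocd ->]]]].
by rewrite wreathM !wsplitE /=; case: s; rewrite odd_permM -?ocd.
Qed.

Lemma G_der1_wreath m w : w \in [~: G m.+2, G m.+2] ->
  exists x y, [/\ x \in G m.+1, y \in G m.+1, x * y \in [~: B m.+1, B m.+1] & w = wreath false x y].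
Proof.
move=> Rw; have RBw := subsetP (commgSS (G_sub_B _) (G_sub_B _)) w Rw.
have [x [y [Bx By xyN def_w]]] := B_der1_wreath RBw.
have ox : odd_perm x = false by rewrite -(G_der1_parity Rw) def_w wsplitE.
have := subsetP (der1_subG _) w Rw; rewrite def_w wreath_G // ox => /eqP oy.
by exists x, y; split=> //; apply/setIdP; rewrite ?ox -?oy.
Qed.

Lemma perm_leaf0 (p : {perm leaf 0}) : p = 1.
Proof. by apply/permP => x; rewrite perm1 (tuple0 (p x)) (tuple0 x). Qed.

Lemma der1_B1 : [~: B 1, B 1] = 1.
Proof.
apply/trivgP/subsetP => _ /B_der1_wreath [x [y [_ _ _ ->]]].
by rewrite (perm_leaf0 x) (perm_leaf0 y) wreath1 group1.
Qed.

Lemma wreath_commg n (x y b d : {perm leaf n}) : x * y = [~ b, d] ->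
  wreath false x y = [~ wreath true 1 b, wreath false (d * y^-1) d].
Proof.
move=> xy_bd; rewrite /commg /conjg !wreathV !wreathM /=; congr wreath.
  have bd : b^-1 * d^-1 * b * d = x * y by rewrite xy_bd /commg /conjg !mulgA.
  by rewrite !mulgA bd mulgK.
by rewrite invg1 !mul1g invMg invgK mulgKV.
Qed.

Lemma B_der1_commg n w : w \in [~: B n.+1, B n.+1] ->
  exists2 b, b \in G n.+1 & exists2 d, d \in B n.+1 & w = [~ b, d].
Proof.
elim: n w => [|n IHn] w.
  by rewrite der1_B1 => /set1gP ->; exists 1; rewrite ?group1 //; exists 1; rewrite ?group1 ?comm1g.
case/B_der1_wreath => x [y [Bx By /IHn [b Gb [d Bd xy_bd]] ->]].
exists (wreath true 1 b); first exact: wreath_swap_G.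
by exists (wreath false (d * y^-1) d); [rewrite wreath_B ?groupM ?groupV | apply: wreath_commg].
Qed.

Lemma G_der1_commg n w : w \in [~: G n.+1, G n.+1] ->
  exists2 g, g \in G n.+1 & exists2 h, h \in G n.+1 & w = [~ g, h].
Proof.
case: n w => [|m] w Rw.
  have := subsetP (commgSS (G_sub_B 1) (G_sub_B 1)) w Rw; rewrite der1_B1 => /set1gP ->.
  by exists 1; rewrite ?group1 //; exists 1; rewrite ?group1 ?comm1g.
have [x [y [Gx Gy xyN ->]]] := G_der1_wreath Rw.
have /setIdP [By oy] := Gy.
have [b Gb [d Bd xy_bd]] := B_der1_commg xyN.
exists (wreath true 1 b); first exact: wreath_swap_G.
exists (wreath false (d * y^-1) d); last exact: wreath_commg.
by rewrite wreath_G ?groupM ?groupV // odd_permM odd_permV (negbTE oy) addbF.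
Qed.

Lemma pcommE (gT : finGroupType) (a b : gT) : pcomm a b = [~ a^-1, b^-1].
Proof. by rewrite /pcomm /commg /conjg !invgK !mulgA. Qed.

Theorem theorem4 (k : nat) (hk : 1 <= k) :
  ([~: G k, G k] = [set pcomm f1 f2 | f1 in G k, f2 in G k])%g.
Proof.
case: k hk => // n _; apply/setP => w.
apply/idP/imset2P => [/G_der1_commg [g Gg [h Gh ->]] | [f1 f2 Gf1 Gf2 ->]].
  by exists g^-1 h^-1; rewrite ?groupV // pcommE !invgK.
by rewrite pcommE mem_commg ?groupV.
Qed.
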